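(* Let $H$ be a connected edge-weighted graph with a $w$-gridtree $\mathcal{T}$. Let $\eta$ and $\eta'$ be columns such that $\eta$ is an ancestor of $\eta'$ in $\mathcal{T}$ and the path between them in $\mathcal{T}$ contains exactly $m$ columns strictly between $\eta$ and $\eta'$. Then every path $P$ in $H$ from a vertex $u\in\eta$ to a vertex $v\in V(H_{\eta'})$ has length at least $m\cdot w$.
   Context: A $w$-gridtree for a connected edge-weighted graph $H$ consists of a partition of $V(H)$ into disjoint subsets, each designated either a column or a leftover set, together with a rooted tree $\mathcal{T}$ whose nodes are in one-to-one correspondence with the columns and whose edges are in one-to-one correspondence with the leftover sets, satisfying: (Column adjacency) For every edge $(u,v)$ of $H$: either $u,v$ lie in the same subset, or $u,v$ lie in columns adjacent in $\mathcal{T}$, or one lies in a column $\eta$ and the other in a leftover set whose edge of $\mathcal{T}$ is incident to $\eta$. (Column width) For a column $\eta$, every other column and every edge of $\mathcal{T}$ is either below $\eta$ (in the subtree of $\mathcal{T}$ rooted at $\eta$; for edges, both endpoints in that subtree) or above $\eta$ (otherwise); a vertex is above/below $\eta$ if its column or leftover set is. If $a\in\eta$ is adjacent in $H$ to a vertex above $\eta$, $b$ is a vertex below $\eta$, and $P$ is a path in $H$ from $a$ to $b$, then $P$ has length at least $w$. (Column shortcut) For a column $\eta$, let $H_\eta$ be the subgraph of $H$ induced by $\eta$, all columns below $\eta$, and all leftover sets below $\eta$ or incident to $\eta$. There is a shortest path $\pi_\eta$ of $H_\eta$ such that every vertex of $\eta$ is within distance $2w$ of $\pi_\eta$ in the induced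 subgraph $H[\eta]$. *)

From mathcomp Require Import all_boot all_order all_algebra.
Set Implicit Arguments. Unset Strict Implicit. Unset Printing Implicit Defensive.
Import Order.TTheory GRing.Theory Num.Theory.
Local Open Scope ring_scope.

Section Graphs.
Variables (R : realFieldType) (V : finType).

Definition wgraph (adj : rel V) (wt : V -> V -> R) : Prop :=
  irreflexive adj /\ symmetric adj /\
  (forall x y, adj x y -> wt x y = wt y x) /\
  (forall x y, adj x y -> 0 <= wt x y).

Definition connected (adj : rel V) : Prop :=
  forall x y : V, exists p : seq V, path adj x p /\ last x p = y.

Definition is_path (adj : rel V) (x : V) (p : seq V) : bool :=
  path adj x p && uniq (x :: p).

Definition plen (wt : V -> V -> R) (x : V) (p : seq V) : R :=
  \sum_(e <- zip (x :: p) p) wt e.1 e.2.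

End Graphs.

Section Gridtree.
Variables (R : realFieldType) (V C : finType).

Definition rooted_tree (root : C) (par : C -> C) : Prop :=
  par root = root /\ forall c, exists k, iter k par c = root.

Definition desc (par : C -> C) (c d : C) : Prop :=
  exists k, iter k par c = d.

(* Location of a vertex: [inl c] = column c; [inr c] = leftover set of the
   tree edge {c, par c} (c non-root). *)
Definition loc_below (par : C -> C) (eta : C) (l : C + C) : Prop :=
  match l with
  | inl c => c <> eta /\ desc par c eta
  | inr c => c <> eta /\ desc par c eta
  end.

Definition loc_above (par : C -> C) (eta : C) (l : C + C) : Prop :=
  match l with
  | inl c => ~ desc par c eta
  | inr c => ~ (c <> eta /\ desc par c eta)
  end.

(* Location belongs to H_eta: eta, columns below eta, leftover sets below
   eta or incident to eta. *)
Definition loc_in_H (par : C -> C) (eta : C) (l : C + C) : Prop :=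
  match l with
  | inl c => desc par c eta
  | inr c => desc par c eta
  end.

Definition leftover_ok (root : C) (loc : V -> C + C) : Prop :=
  forall v c, loc v = inr c -> c <> root.

Definition column_adjacency (adj : rel V) (par : C -> C) (loc : V -> C + C) : Prop :=
  forall u v, adj u v ->
    loc u = loc v \/
    (exists c c', loc u = inl c /\ loc v = inl c' /\ c <> c' /\
                  (par c = c' \/ par c' = c)) \/
    (exists c e, ((loc u = inl c /\ loc v = inr e) \/ (loc u = inr e /\ loc v = inl c))
                 /\ (c = e \/ c = par e)).

Definition column_width (adj : rel V) (wt : V -> V -> R) (w : R)
    (par : C -> C) (loc : V -> C + C) : Prop :=
  forall (eta : C) (a b : V) (p : seq V),
    loc a = inl eta ->
    (exists x, adj a x /\ loc_above par eta (loc x)) ->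
    loc_below par eta (loc b) ->
    is_path adj a p -> last a p = b ->
    w <= plen wt a p.

Definition column_shortcut (adj : rel V) (wt : V -> V -> R) (w : R)
    (par : C -> C) (loc : V -> C + C) : Prop :=
  forall eta : C,
    exists (s : V) (pi : seq V),
      [/\ is_path adj s pi,
          (forall x, x \in s :: pi -> loc_in_H par eta (loc x)),
          (forall q : seq V, is_path adj s q -> last s q = last s pi ->
             (forall x, x \in s :: q -> loc_in_H par eta (loc x)) ->
             plen wt s pi <= plen wt s q) &
          (forall x, loc x = inl eta ->
             exists (y : V) (t : seq V),
               [/\ y \in s :: pi, is_path adj x t, last x t = y,
                   (forall z, z \in x :: t -> loc z = inl eta) &
                   plen wt x t <= 2 * w])].

Definition gridtree (adj : rel V) (wt : V -> V -> R) (w : R)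
    (root : C) (par : C -> C) (loc : V -> C + C) : Prop :=
  [/\ rooted_tree root par, leftover_ok root loc, column_adjacency adj par loc,
      column_width adj wt w par loc & column_shortcut adj wt w par loc].

Definition anc_gap (par : C -> C) (eta eta' : C) (m : nat) : Prop :=
  (eta' = eta /\ m = 0%N) \/
  (iter m.+1 par eta' = eta /\ forall j, (j <= m)%N -> iter j par eta' <> eta).

End Gridtree.

From mathcomp Require Import all_boot all_order all_algebra.
From mathcomp Require Import zify.
From Stdlib Require Import Classical.
Set Implicit Arguments. Unset Strict Implicit. Unset Printing Implicit Defensive.
Import Order.TTheory GRing.Theory Num.Theory.
Local Open Scope ring_scope.

(* Write c_j := par^j eta', so that c_0 = eta', c_(m+1) = eta and the
   columns strictly between are c_1, ..., c_m.  Two general facts drive the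
   argument:
   - (crossing) a path starting above a column d and ending outside the
     region above d has a first vertex z outside that region; by column
     adjacency z lies in the column d itself, and its predecessor is above d;
   - (width) by the column-width property, a path from such a z in column
     c_(j+1) down to a vertex below c_(j+1) has length at least w.
   Induction on j then shows that a path from a vertex of c_j that has a
   neighbour above c_j down to H_eta' has length at least j * w: cross into
   c_(j-1), pay w before the crossing and j-1 times w after it.  The theorem
   follows by crossing from u into c_m. *)

Section PathLength.
Variables (R : realFieldType) (V : finType) (adj : rel V) (wt : V -> V -> R).

Lemma plen_cons x y p : plen wt x (y :: p) = wt x y + plen wt y p.
Proof. by rewrite /plen /= big_cons. Qed.

Lemma plen_cat x p q : plen wt x (p ++ q) = plen wt x p + plen wt (last x p) q.
Proof.
elim: p x => [|y p IHp] x /=; first by rewrite /plen big_nil add0r.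
by rewrite !plen_cons IHp addrA.
Qed.

Lemma plen_split x p z q :
  plen wt x (p ++ z :: q) = plen wt x (rcons p z) + plen wt z q.
Proof. by rewrite -cat_rcons plen_cat last_rcons. Qed.

Lemma plen_ge0 x p :
  (forall a b, adj a b -> 0 <= wt a b) -> path adj x p -> 0 <= plen wt x p.
Proof.
move=> wt_ge0; elim: p x => [|y p IHp] x /=; first by rewrite /plen big_nil.
by case/andP=> xy yp; rewrite plen_cons addr_ge0 ?wt_ge0 ?IHp.
Qed.

Lemma is_path_split x p z q :
  is_path adj x (p ++ z :: q) ->
  [/\ is_path adj x (rcons p z), is_path adj z q & adj (last x p) z].
Proof.
rewrite /is_path cat_path => /andP[/andP[xp /andP[z_adj zq]] u].
move: (u); rewrite -cat_cons -cat_rcons cat_uniq => /and3P[uxz _ _].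
move: u; rewrite -cat_cons cat_uniq => /and3P[_ _ uzq].
rewrite rcons_path xp z_adj uxz uzq; split=> //; rewrite andbT; exact: zq.
Qed.

End PathLength.

Lemma first_exit (T : Type) (P : T -> Prop) (x : T) (p : seq T) :
  P x -> ~ P (last x p) ->
  exists p1 z p2, [/\ p = p1 ++ z :: p2, P (last x p1) & ~ P z].
Proof.
elim: p x => [|y p IHp] x Px nPlast //=.
have [Py | nPy] := classic (P y); last by exists [::], y, p.
have [p1 [z [p2 [-> Pp1 nPz]]]] := IHp y Py nPlast.
by exists (y :: p1), z, p2.
Qed.

Section RootedTree.
Variables (C : finType) (root : C) (par : C -> C).
Hypothesis tree : rooted_tree root par.

Lemma iter_fixed d n : par d = d -> iter n par d = d.
Proof. by move=> pard; elim: n => //= n ->. Qed.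

Lemma cycle_fixed d n : iter n.+1 par d = d -> par d = d.
Proof.
case: tree => par_root reach_root dd; have [k dk] := reach_root d.
have period q : iter (q * n.+1) par d = d.
  by elim: q => // q IHq; rewrite mulSn iterD IHq dd.
suff -> : d = root by [].
rewrite -[in LHS](period k) -dk.
have -> : (k * n.+1 = (k * n.+1 - k) + k)%N by rewrite subnK // leq_pmulr.
by rewrite iterD dk iter_fixed.
Qed.

Lemma desc_trans c d e : desc par c d -> desc par d e -> desc par c e.
Proof. by move=> [k ck] [l dl]; exists (l + k)%N; rewrite iterD ck. Qed.

Lemma desc_par c d : desc par (par c) d -> desc par c d.
Proof. by move=> [k ck]; exists k.+1; rewrite iterSr. Qed.

Lemma desc_par_self d : desc par (par d) d -> par d = d.
Proof. by move=> [k dk]; apply: (@cycle_fixed d k); rewrite iterSr. Qed.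

End RootedTree.

Lemma below_not_above (C : finType) (par : C -> C) d l :
  loc_below par d l -> ~ loc_above par d l.
Proof. by case: l => e /= [eNd e_d] above; apply: above. Qed.

Section Crossing.
Variables (V C : finType) (adj : rel V) (root : C) (par : C -> C) (loc : V -> C + C).
Hypothesis adj_sym : symmetric adj.
Hypothesis tree : rooted_tree root par.
Hypothesis col_adj : column_adjacency adj par loc.

Lemma edge_leaves_above a b d :
  adj a b -> loc_above par d (loc a) -> ~ loc_above par d (loc b) ->
  loc b = inl d.
Proof.
(* Only an edge from the parent column of d or from the leftover set of an
   edge incident to d can leave the region above d. *)
move=> ab; case: (col_adj ab) =>
    [-> // | [[e [e' [-> [-> [_ [ee' | e'e]]]]]] | [e [f [[[-> ->] | [-> ->]] ef]]]]] /=.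
- move=> eNd e'Nd; exfalso; apply: e'Nd => e'd; apply: eNd.
  by apply: desc_par; rewrite ee'.
- move=> eNd /NNPP [[|k] e'd]; first by rewrite -e'd.
  by exfalso; apply: eNd; exists k; rewrite -e'd iterSr e'e.
- move=> eNd fNd; exfalso; apply: fNd => -[fd [k fk]]; apply: eNd.
  case: ef => [-> | ->]; first by exists k.
  by case: k fk => [|k] fk //; exists k; rewrite -fk iterSr.
- move=> fNd /NNPP ed; have [fd | fNd'] := eqVneq f d.
    subst d; case: ef ed => -> // ed.
    by rewrite (desc_par_self tree ed).
  exfalso; apply: fNd; split; first exact/eqP.
  by case: ef => ef; [rewrite -ef | apply: desc_par; rewrite -ef].
Qed.

Lemma path_crosses_column d x q :
  is_path adj x q -> loc_above par d (loc x) ->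
  ~ loc_above par d (loc (last x q)) ->
  exists p1 z p2, [/\ q = p1 ++ z :: p2, is_path adj x (rcons p1 z),
    is_path adj z p2, loc z = inl d &
    exists y, adj z y /\ loc_above par d (loc y)].
Proof.
move=> xq x_above last_out.
have [p1 [z [p2 [qE p1_above z_out]]]] :=
  first_exit (P := fun y => loc_above par d (loc y)) x_above last_out.
subst q; have [xz zp2 p1z] := is_path_split xq.
exists p1, z, p2; split=> //; first exact: edge_leaves_above p1z p1_above z_out.
by exists (last x p1); rewrite adj_sym.
Qed.

End Crossing.

Section ColumnChain.
Variables (C : finType) (root : C) (par : C -> C) (eta eta' : C) (m : nat).
Hypothesis tree : rooted_tree root par.
Hypothesis eta_anc : iter m.+1 par eta' = eta.
Hypothesis eta_first : forall j, (j <= m)%N -> iter j par eta' <> eta.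

Let c j := iter j par eta'.

Lemma chain_not_fixed j : (j <= m)%N -> par (c j) <> c j.
Proof.
move=> jm cjfix; apply: (eta_first jm); rewrite -eta_anc.
have -> : m.+1 = ((m.+1 - j) + j)%N by rewrite subnK // leqW.
by rewrite iterD [in RHS]iter_fixed.
Qed.

Lemma chain_desc i j : (j <= m)%N -> desc par (c i) (c j) <-> (i <= j)%N.
Proof.
move=> jm; split=> [[k cij] | ij]; last first.
  by exists (j - i)%N; rewrite /c -iterD subnK.
rewrite leqNgt; apply/negP => ji; apply: (chain_not_fixed jm).
have cj_cycle : iter (k + i - j - 1).+1 par (c j) = c j.
  by rewrite -[in RHS]cij /c -!iterD; congr (iter _ par eta'); lia.
exact: (cycle_fixed tree cj_cycle).
Qed.

Lemma chain_above i j :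
  (j < i)%N -> (j <= m)%N -> loc_above par (c j) (inl (c i)).
Proof. by move=> ji jm /= /(chain_desc i jm); rewrite leqNgt ji. Qed.

Lemma chain_below j : (j <= m)%N -> loc_below par (c j.+1) (inl (c j)).
Proof.
move=> jm; split; last by exists 1%N.
move=> cjj; suff: (j.+1 <= j)%N by rewrite ltnn.
by apply/(chain_desc j.+1 jm); exists 0%N; rewrite cjj.
Qed.

Lemma chain_H_below j l :
  (0 < j <= m)%N -> loc_in_H par eta' l -> loc_below par (c j) l.
Proof.
case/andP=> j_gt0 jm.
suff below d : desc par d eta' -> d <> c j /\ desc par d (c j).
  by case: l => d /below.
move=> d_eta'; split; last by apply: desc_trans d_eta' _; apply/(chain_desc 0 jm).
move=> dj; move: d_eta'; rewrite dj => /(chain_desc j (leq0n m)).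
by rewrite leqNgt j_gt0.
Qed.

Variables (R : realFieldType) (V : finType) (adj : rel V) (wt : V -> V -> R).
Variables (w : R) (loc : V -> C + C).
Hypothesis adj_sym : symmetric adj.
Hypothesis col_adj : column_adjacency adj par loc.
Hypothesis col_width : column_width adj wt w par loc.

Lemma chain_path_bound j x q :
  (0 < j <= m)%N -> is_path adj x q -> loc_in_H par eta' (loc (last x q)) ->
  loc x = inl (c j) -> (exists y, adj x y /\ loc_above par (c j) (loc y)) ->
  j%:R * w <= plen wt x q.
Proof.
elim: j x q => [|j IHj] x q // /andP[_ jm] xq last_H x_col x_exit.
have [j0 | j_gt0] := posnP j.
  rewrite j0 mul1r; apply: (col_width x_col x_exit _ xq erefl).
  exact: chain_H_below.
have jm' : (j <= m)%N := ltnW jm.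
have x_above : loc_above par (c j) (loc x).
  by rewrite x_col; apply: chain_above.
have last_out : ~ loc_above par (c j) (loc (last x q)).
  by apply/below_not_above/chain_H_below => //; rewrite j_gt0.
have [p1 [z [p2 [qE xz zp2 z_col z_exit]]]] :=
  path_crosses_column adj_sym tree col_adj xq x_above last_out.
rewrite qE plen_split -addn1 natrD mulrDl mul1r addrC.
apply: lerD.
  apply: (col_width x_col x_exit _ xz (last_rcons _ _ _)).
  by rewrite z_col; apply: chain_below.
apply: IHj => //; first by rewrite j_gt0.
by move: last_H; rewrite qE last_cat.
Qed.

End ColumnChain.

Theorem claim5p2 (R : realFieldType) (V C : finType) (adj : rel V)
    (wt : V -> V -> R) (w : R) (root : C) (par : C -> C) (loc : V -> C + C)
    (eta eta' : C) (m : nat) (u v : V) (p : seq V) :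
  wgraph adj wt -> connected adj -> gridtree adj wt w root par loc ->
  anc_gap par eta eta' m ->
  loc u = inl eta -> loc_in_H par eta' (loc v) ->
  is_path adj u p -> last u p = v ->
  m%:R * w <= plen wt u p.
Proof.
move=> [_ [adj_sym [_ wt_ge0]]] _ [tree _ col_adj col_width _] gap u_eta v_H up pv.
have len_ge0 x q : is_path adj x q -> 0 <= plen wt x q.
  by case/andP=> xq _; exact: plen_ge0 wt_ge0 xq.
case: gap => [[_ m0] | [eta_anc eta_first]]; first by rewrite m0 mul0r len_ge0.
have [m0 | m_gt0] := posnP m; first by rewrite m0 mul0r len_ge0.
have u_above : loc_above par (iter m par eta') (loc u).
  by rewrite u_eta -eta_anc; apply: (chain_above tree eta_anc eta_first).
have v_out : ~ loc_above par (iter m par eta') (loc (last u p)).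
  rewrite pv; apply/below_not_above/(chain_H_below tree eta_anc eta_first) => //.
  by rewrite m_gt0 leqnn.
have [p1 [z [p2 [pE uz zp2 z_col z_exit]]]] :=
  path_crosses_column adj_sym tree col_adj up u_above v_out.
rewrite pE plen_split; apply: ler_wpDl (len_ge0 _ _ uz) _.
apply: (chain_path_bound tree eta_anc eta_first adj_sym col_adj col_width
          _ zp2 _ z_col z_exit); first by rewrite m_gt0 leqnn.
by move: v_H; rewrite -pv pE last_cat.
Qed.
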